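(* Let $X$ be a Tychonoff space. The following are equivalent: (1) $X$ is finite; (2) $T''(X)$ is Noetherian; (3) $T''(X)$ is Artinian.
   Context: $C(X)$ is the ring of real-valued continuous functions on $X$; a cozero set is a set $\{x: h(x)\neq 0\}$ with $h\in C(X)$. $T''(X)$ is the ring (under pointwise operations) of all functions $f\colon X\to\mathbb{R}$ for which there is a dense cozero set $U$ of $X$ with $f|_U$ continuous. *)

From HB Require Import structures.
From mathcomp Require Import all_boot all_order all_algebra.
From mathcomp Require Import all_classical all_reals all_analysis.
Set Implicit Arguments. Unset Strict Implicit. Unset Printing Implicit Defensive.
Import Order.TTheory GRing.Theory Num.Theory.
Import numFieldNormedType.Exports.
Local Open Scope classical_set_scope.
Local Open Scope ring_scope.

(* Tychonoff = T1 + completely regular (points separated from closed sets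
   by real-valued continuous functions). *)
Definition real_completely_regular (R : realType) (X : topologicalType) : Prop :=
  forall (a : X) (B : set X), closed B -> ~ B a ->
    exists f : X -> R, continuous f /\ f a = 0 /\ (forall b, B b -> f b = 1).

Definition tychonoff_space (R : realType) (X : topologicalType) : Prop :=
  @accessible_space X /\ real_completely_regular R X.

Definition cozero_set (R : realType) (X : topologicalType) (U : set X) : Prop :=
  exists h : X -> R, continuous h /\ U = [set x | h x != 0].

Definition Tpp (R : realType) (X : topologicalType) : set (X -> R) :=
  [set f | exists U : set X, @cozero_set R X U /\ dense U /\ {within U, continuous f}].

Definition Tpp_ideal (R : realType) (X : topologicalType) (I : set (X -> R)) : Prop :=
  [/\ I `<=` @Tpp R X,
      I (fun _ => 0),
      (forall f g, I f -> I g -> I (fun x => f x - g x))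
    & (forall f g, @Tpp R X f -> I g -> I (fun x => f x * g x))].

Definition Tpp_noetherian (R : realType) (X : topologicalType) : Prop :=
  forall I : nat -> set (X -> R), (forall n, @Tpp_ideal R X (I n)) ->
    (forall n, I n `<=` I n.+1) -> exists N, forall n, (N <= n)%N -> I n = I N.

Definition Tpp_artinian (R : realType) (X : topologicalType) : Prop :=
  forall I : nat -> set (X -> R), (forall n, @Tpp_ideal R X (I n)) ->
    (forall n, I n.+1 `<=` I n) -> exists N, forall n, (N <= n)%N -> I n = I N.

From HB Require Import structures.
From mathcomp Require Import all_boot all_order all_algebra.
From mathcomp Require Import all_classical all_reals all_analysis.
From mathcomp Require Import lra.

(** If X is finite and T1, it is discrete, so T''(X) is the ring of all real
    functions on X; an ideal I of it is determined by the set of points where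
    some member of I does not vanish, and chains of ideals stabilize together
    with chains of subsets of X.

    If X is infinite, complete regularity splits any infinite Y into a point
    a with a continuous psi, psi a = 0, such that Y ∩ {psi > 1/3} is still
    infinite.  Iterating gives infinite sets Y_{n+1} = Y_n ∩ {psi_n > 1/3},
    with a_n ∈ Y_n \ Y_{n+1}; Y_n is the cozero set of the continuous
    e_n = ∏_{k<n} max(0, psi_k - 1/3).  The ideals of functions vanishing on
    Y_n increase strictly (max(0, 1/3 - psi_n) separates them at a_n) and
    those of functions vanishing off Y_n decrease strictly (e_n separates
    them at a_n). *)

Import Order.TTheory GRing.Theory Num.Theory.
Import numFieldNormedType.Exports.
Local Open Scope classical_set_scope.

Lemma nondecreasing_sets_stationary {T : eqType} (A : nat -> set T) :
  finite_set [set: T] -> (forall n, A n `<=` A n.+1) ->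
  exists N, forall n, (N <= n)%N -> A n = A N.
Proof.
move=> /finite_seqP[s sE] A_incr.
have A_mono : {homo A : m n / (m <= n)%N >-> m `<=` n}.
  exact: homo_leq subset_refl (fun _ _ _ => @subset_trans _ _ _ _) A_incr.
have /choice[m Am] : forall x, exists k, forall n, A n x -> A k x.
  move=> x; have [[n Anx]|noA] := pselect (exists n, A n x); first by exists n.
  by exists 0%N => n Anx; case: noA; exists n.
exists (\max_(x <- s) m x)%N => n Nn; apply/seteqP; split; last exact: A_mono.
move=> x /Am; apply: A_mono; apply: leq_bigmax_seq => //.
by have : [set` s] x by rewrite -sE.
Qed.

Lemma nonincreasing_sets_stationary {T : eqType} (A : nat -> set T) :
  finite_set [set: T] -> (forall n, A n.+1 `<=` A n) ->
  exists N, forall n, (N <= n)%N -> A n = A N.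
Proof.
move=> finT A_decr.
have [|N HN] := nondecreasing_sets_stationary (fun n => ~` A n) finT.
  by move=> n; apply: subsetC.
by exists N => n /HN /(can_inj setCK).
Qed.

Section Tpp_ring.
Local Open Scope ring_scope.
Variables (R : realType) (X : topologicalType).

Definition cozero (f : X -> R) : set X := [set x | f x != 0].

Lemma cozero_set_open (U : set X) : cozero_set R U -> open U.
Proof.
move=> [h [hc ->]].
have -> : [set x | h x != 0] = h @^-1` [set r : R | r != 0] by [].
by apply: open_comp; [move=> x _; apply: hc | exact: open_neq].
Qed.

Lemma Tpp_common_domain {f g : X -> R} : Tpp f -> Tpp g ->
  exists U : set X, [/\ cozero_set R U, dense U,
    {within U, continuous f} & {within U, continuous g}].
Proof.
move=> [U [[hU [hUc UE]] [dU fc]]] [V [[hV [hVc VE]] [dV gc]]].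
exists (U `&` V); split.
- exists (fun x => hU x * hV x); split.
    by move=> x; exact: continuousM (hUc x) (hVc x).
  rewrite UE VE; apply/seteqP; split=> x /=; rewrite mulf_eq0 negb_or.
    by move=> [-> ->].
  by move/andP.
- by apply: denseI => //; apply: cozero_set_open; exists hU.
- exact: continuous_subspaceW fc.
- exact: continuous_subspaceW gc.
Qed.

Lemma continuous_Tpp {f : X -> R} : continuous f -> Tpp f.
Proof.
move=> fc; exists setT; split; last split.
- exists (fun=> 1); split; first by move=> x; exact: cst_continuous.
  by apply/seteqP; split=> x //= _; rewrite oner_neq0.
- by move=> O O0 _; rewrite setIT.
- exact: continuous_subspaceT.
Qed.

Lemma TppB {f g : X -> R} : Tpp f -> Tpp g -> Tpp (fun x => f x - g x).
Proof.
move=> /Tpp_common_domain/[apply] -[U [cU dU fc gc]].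
by exists U; split=> //; split=> // x; exact: continuousB (fc x) (gc x).
Qed.

Lemma TppM {f g : X -> R} : Tpp f -> Tpp g -> Tpp (fun x => f x * g x).
Proof.
move=> /Tpp_common_domain/[apply] -[U [cU dU fc gc]].
by exists U; split=> //; split=> // x; exact: continuousM (fc x) (gc x).
Qed.

Lemma max0r_eq0 (t : R) : (Num.max 0 t == 0) = (t <= 0).
Proof. by have [_|t_gt0] := leP t 0; [rewrite eqxx | rewrite gt_eqF]. Qed.

Lemma continuous_max0_subr (c : R) {h : X -> R} :
  continuous h -> continuous (fun x => Num.max 0 (c - h x)).
Proof.
move=> hc x; apply: (@continuous_max R X (fun=> 0) (fun x => c - h x)).
  exact: cvg_cst.
by apply: continuousB; [exact: cvg_cst | exact: hc].
Qed.

Lemma continuous_max0_subl (c : R) {h : X -> R} :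
  continuous h -> continuous (fun x => Num.max 0 (h x - c)).
Proof.
move=> hc x; apply: (@continuous_max R X (fun=> 0) (fun x => h x - c)).
  exact: cvg_cst.
by apply: continuousB; [exact: hc | exact: cvg_cst].
Qed.

Lemma Tpp_idealD {I : set (X -> R)} {f g : X -> R} :
  Tpp_ideal I -> I f -> I g -> I (fun x => f x + g x).
Proof.
move=> [_ I0 IB _] If Ig; have := IB _ _ If (IB _ _ I0 Ig).
by congr I; apply/funext => x; rewrite sub0r opprK.
Qed.

Definition vanishing_ideal (S : set X) : set (X -> R) :=
  [set f | Tpp f /\ forall x, S x -> f x = 0].

Lemma Tpp_ideal_vanishing (S : set X) : Tpp_ideal (vanishing_ideal S).
Proof.
split.
- by move=> f [].
- by split=> //; apply: continuous_Tpp; exact: cst_continuous.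
- move=> f g [Tf f0] [Tg g0]; split; first exact: TppB.
  by move=> x Sx; rewrite f0 // g0 // subr0.
- move=> f g Tf [Tg g0]; split; first exact: TppM.
  by move=> x Sx; rewrite g0 // mulr0.
Qed.

Lemma vanishing_ideal_proper (S T : set X) (f : X -> R) (x : X) :
  T `<=` S -> continuous f -> (forall y, T y -> f y = 0) -> S x -> f x != 0 ->
  vanishing_ideal S `<` vanishing_ideal T.
Proof.
move=> TS fc fT Sx fx; split; first by move=> g [Tg gS]; split=> // y /TS/gS.
by move=> /(_ f (conj (continuous_Tpp fc) fT)) [_ /(_ x Sx)/eqP]; apply/negP.
Qed.

Lemma proper_chain_not_Tpp_noetherian {I : nat -> set (X -> R)} :
  (forall n, Tpp_ideal (I n)) -> (forall n, I n `<` I n.+1) ->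
  ~ Tpp_noetherian R X.
Proof.
move=> Iid Ilt noeth; have [N HN] := noeth I Iid (fun n => properW (Ilt n)).
by have := Ilt N; rewrite (HN N.+1 (leqnSn N)); exact: properxx.
Qed.

Lemma proper_chain_not_Tpp_artinian {I : nat -> set (X -> R)} :
  (forall n, Tpp_ideal (I n)) -> (forall n, I n.+1 `<` I n) ->
  ~ Tpp_artinian R X.
Proof.
move=> Iid Ilt art; have [N HN] := art I Iid (fun n => properW (Ilt n)).
by have := Ilt N; rewrite (HN N.+1 (leqnSn N)); exact: properxx.
Qed.

Definition ideal_cozero (I : set (X -> R)) : set X :=
  [set x | exists2 g, I g & g x != 0].

Lemma ideal_cozeroS {I J : set (X -> R)} :
  I `<=` J -> ideal_cozero I `<=` ideal_cozero J.
Proof. by move=> IJ x [g /IJ Jg gx]; exists g. Qed.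

Section finite_space.
Hypothesis X_accessible : accessible_space X.
Hypothesis X_finite : finite_set [set: X].

Lemma finite_accessible_open (A : set X) : open A.
Proof.
rewrite -[A]setCK openC.
apply: (accessible_finite_set_closed.1 X_accessible).
exact: sub_finite_set X_finite.
Qed.

Lemma finite_accessible_continuous (T : topologicalType) (f : X -> T) :
  continuous f.
Proof. by apply/continuousP => A _; exact: finite_accessible_open. Qed.

Lemma Tpp_ideal_point_mass {I : set (X -> R)} (a : X) (c : R) :
  Tpp_ideal I -> ideal_cozero I a -> I (fun x => if x == a then c else 0).
Proof.
move=> [_ _ _ IM] [g Ig ga].
have -> : (fun x => if x == a then c else 0) =
          (fun x => (if x == a then c / g a else 0) * g x).
  by apply/funext => x; have [->|_] := eqVneq x a; rewrite ?divfK ?mul0r.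
by apply: IM => //; apply/continuous_Tpp/finite_accessible_continuous.
Qed.

Lemma Tpp_ideal_memP {I : set (X -> R)} (f : X -> R) :
  Tpp_ideal I -> I f <-> cozero f `<=` ideal_cozero I.
Proof.
move=> Iid; have [_ I0 _ _] := Iid.
split=> [If x fx|]; first by exists f.
have [s sE] := (finite_seqP _).1 X_finite.
have : forall x, f x != 0 -> x \in s.
  by move=> x _; have : [set` s] x by rewrite -sE.
elim: s {sE} f => [|a s IH] f fs fI.
  suff -> : f = (fun=> 0) by [].
  by apply/funext => x; apply/eqP; apply: contraT => /fs.
pose fa x := if x == a then f a else 0.
have -> : f = (fun x => (f x - fa x) + fa x).
  by apply/funext => x; rewrite subrK.
apply: Tpp_idealD => //.
  apply: IH => x; rewrite /cozero /fa /=;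
    have [->|xa] := eqVneq x a; rewrite ?subrr ?eqxx ?subr0 //.
  - by move=> /fs; rewrite inE (negbTE xa).
  - exact: fI.
have [fa0|/fI] := eqVneq (f a) 0; last exact: Tpp_ideal_point_mass.
by rewrite (_ : fa = fun=> 0) //; apply/funext => x; rewrite /fa fa0 if_same.
Qed.

Lemma Tpp_ideal_cozero_inj (I J : set (X -> R)) :
  Tpp_ideal I -> Tpp_ideal J -> ideal_cozero I = ideal_cozero J -> I = J.
Proof.
move=> Iid Jid IJ; apply/seteqP; split=> f.
  by move/(Tpp_ideal_memP f Iid); rewrite IJ => /(Tpp_ideal_memP f Jid).
by move/(Tpp_ideal_memP f Jid); rewrite -IJ => /(Tpp_ideal_memP f Iid).
Qed.

Lemma finite_accessible_Tpp_noetherian : Tpp_noetherian R X.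
Proof.
move=> I Iid Iincr.
have [N HN] := nondecreasing_sets_stationary (fun n => ideal_cozero (I n))
  X_finite (fun n => ideal_cozeroS (Iincr n)).
by exists N => n /HN; apply: Tpp_ideal_cozero_inj.
Qed.

Lemma finite_accessible_Tpp_artinian : Tpp_artinian R X.
Proof.
move=> I Iid Idecr.
have [N HN] := nonincreasing_sets_stationary (fun n => ideal_cozero (I n))
  X_finite (fun n => ideal_cozeroS (Idecr n)).
by exists N => n /HN; apply: Tpp_ideal_cozero_inj.
Qed.

End finite_space.

Lemma tychonoff_infinite_split {Y : set X} :
  tychonoff_space R X -> infinite_set Y ->
  exists (a : X) (psi : X -> R), [/\ Y a, continuous psi, psi a = 0 &
    infinite_set (Y `&` [set x | 1/3 < psi x])].
Proof.
move=> [acc creg] Yinf.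
have [a Ya] := infinite_setN0 Yinf.
have [b [Yb ba]] := infinite_setN0 (infinite_setD Yinf (finite_set1 a)).
have [phi [phic [phia phib]]] :=
  creg a [set b] (@accessible_closed_set1 _ acc b) (fun ab => ba (esym ab)).
have [|Yfin] := pselect (infinite_set (Y `&` [set x | 1/3 < phi x])).
  by exists a, phi.
exists b, (fun x => 1 - phi x); split=> //.
- by move=> x; apply: continuousB; [exact: cvg_cst | exact: phic].
- by rewrite phib // subrr.
- move=> fin; apply: (infinite_setD Yinf (contrapT Yfin)).
  apply: sub_finite_set fin.
  move=> x [Yx YPx]; split=> //=.
  have : phi x <= 1/3 by rewrite leNgt; apply/negP => ?; exact: YPx.
  lra.
Qed.

Section infinite_space.
Hypothesis X_infinite : infinite_set [set: X].
Variable next : set X -> X * (X -> R).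
Hypothesis next_spec : forall {Y}, infinite_set Y ->
  [/\ Y (next Y).1, continuous (next Y).2, (next Y).2 (next Y).1 = 0 &
      infinite_set (Y `&` [set x | 1/3 < (next Y).2 x])].

Fixpoint cutoff (n : nat) : X -> R :=
  if n is m.+1 then
    let psi := (next (cozero (cutoff m))).2 in
    fun x => cutoff m x * Num.max 0 (psi x - 1/3)
  else fun=> 1.

Local Notation Y n := (cozero (cutoff n)).
Local Notation pt n := (next (Y n)).1.
Local Notation psi n := (next (Y n)).2.

Lemma cozero_cutoffS n : Y n.+1 = Y n `&` [set x | 1/3 < psi n x].
Proof.
apply/seteqP; split=> x;
  rewrite /cozero /= mulf_eq0 negb_or max0r_eq0 -ltNge subr_gt0.
  by move/andP.
by move=> [-> ->].
Qed.

Lemma cozero_cutoff_infinite n : infinite_set (Y n).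
Proof.
elim: n => [|n IH]; last by rewrite cozero_cutoffS; have [] := next_spec IH.
suff -> : Y 0 = setT by [].
by apply/seteqP; split=> x //= _; rewrite /cozero /= oner_neq0.
Qed.

Lemma continuous_psi n : continuous (psi n).
Proof. by have [] := next_spec (cozero_cutoff_infinite n). Qed.

Lemma psi_pt n : psi n (pt n) = 0.
Proof. by have [] := next_spec (cozero_cutoff_infinite n). Qed.

Lemma cozero_cutoff_pt n : Y n (pt n).
Proof. by have [] := next_spec (cozero_cutoff_infinite n). Qed.

Lemma cozero_cutoffS_pt n : ~ Y n.+1 (pt n).
Proof. by rewrite cozero_cutoffS => -[_ /=]; rewrite psi_pt; lra. Qed.

Lemma cutoff_continuous n : continuous (cutoff n).
Proof.
elim: n => [|n IH] /= x; first exact: cst_continuous.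
apply: continuousM; first exact: IH.
by apply: continuous_max0_subl; exact: continuous_psi.
Qed.

Lemma vanishing_cozero_cutoff_proper n :
  vanishing_ideal (Y n) `<` vanishing_ideal (Y n.+1).
Proof.
apply: (@vanishing_ideal_proper _ _ (fun x => Num.max 0 (1/3 - psi n x))
  (pt n)).
- by rewrite cozero_cutoffS; exact: subIsetl.
- by apply: continuous_max0_subr; exact: continuous_psi.
- move=> x; rewrite cozero_cutoffS => -[_ /= psix].
  by apply/eqP; rewrite max0r_eq0 subr_le0 ltW.
- exact: cozero_cutoff_pt.
- by rewrite max0r_eq0 psi_pt subr0 -ltNge.
Qed.

Lemma vanishing_off_cozero_cutoff_proper n :
  vanishing_ideal (~` Y n.+1) `<` vanishing_ideal (~` Y n).
Proof.
apply: (@vanishing_ideal_proper _ _ (cutoff n) (pt n)).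
- by apply: subsetC; rewrite cozero_cutoffS; exact: subIsetl.
- exact: cutoff_continuous.
- by move=> x /negP/negPn/eqP.
- exact: cozero_cutoffS_pt.
- exact: cozero_cutoff_pt.
Qed.

End infinite_space.

Lemma infinite_tychonoff_not_Tpp_noetherian_artinian :
  tychonoff_space R X -> infinite_set [set: X] ->
  ~ Tpp_noetherian R X /\ ~ Tpp_artinian R X.
Proof.
move=> tX Xinf; have [x0 _] := infinite_setN0 Xinf.
have /choice[next next_spec] : forall Y : set X, exists p : X * (X -> R),
    infinite_set Y -> [/\ Y p.1, continuous p.2, p.2 p.1 = 0 &
                         infinite_set (Y `&` [set x | 1/3 < p.2 x])].
  move=> Y; have [Yinf|Yfin] := pselect (infinite_set Y).
    by have [a [psi]] := tychonoff_infinite_split tX Yinf; exists (a, psi).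
  by exists (x0, fun=> 0) => /Yfin.
split.
- apply: (proper_chain_not_Tpp_noetherian (fun n => Tpp_ideal_vanishing _)).
  exact: (vanishing_cozero_cutoff_proper Xinf _ next_spec).
- apply: (proper_chain_not_Tpp_artinian (fun n => Tpp_ideal_vanishing _)).
  exact: (vanishing_off_cozero_cutoff_proper Xinf _ next_spec).
Qed.

End Tpp_ring.

Theorem theorem5p1 (R : realType) (X : topologicalType) :
  @tychonoff_space R X ->
  (finite_set [set: X] <-> @Tpp_noetherian R X) /\
  (finite_set [set: X] <-> @Tpp_artinian R X).
Proof.
move=> tX; have [acc _] := tX.
have infinite_not_chain :=
  infinite_tychonoff_not_Tpp_noetherian_artinian _ _ tX.
split; split.
- exact: finite_accessible_Tpp_noetherian.
- by move=> noeth; apply: contrapT => /infinite_not_chain[].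
- exact: finite_accessible_Tpp_artinian.
- by move=> art; apply: contrapT => /infinite_not_chain[].
Qed.
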